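(* Let $B$ be a complete Boolean algebra, let $X$ and $Y$ be CFG-spaces over $B$, let $U\subset X$ and $V\subset Y$ be arbitrary nonempty subsets, and let $f:U\to V$ be a contractive map. Then there is a unique contractive map $\mathrm{Conv}(f):\mathrm{Conv}(U)\to\mathrm{Conv}(V)$ extending $f$. Moreover, if $f$ is an isometry, then $\mathrm{Conv}(f)$ is an isometry.
   Context: A Boolean metric space over $B$ is a set with symmetric $d$ into $B$, $d(x,y)=0$ iff $x=y$, $d(x,z)\le d(x,y)\vee d(y,z)$. Contractive: $d(f(x),f(y))\le d(x,y)$; isometry: bijection preserving $d$. A partition of $B$ is a finite family of pairwise disjoint elements with supremum $1$; $x$ is a convex combination of $x_0,\dots,x_n$ with coefficients a partition $a_0,\dots,a_n$ if $a_i\wedge d(x,x_i)=0$ for all $i$. A CFG-space is a Boolean metric space that is convex (every such convex combination of its points exists in it) and finitely generated (some finite subset $S$ has every point as a convex combination of points of $S$). For $U$ a subset of a CFG-space $X$ over a complete $B$, $\mathrm{Conv}(U)$ denotes the intersection of all subsets of $X$ containing $U$ that are CFG-spaces with the restricted metric; it is itself the least such CFG-subspace containing $U$. *)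

(* a Boolean algebra is a ctbDistrLatticeType
   (complemented distributive lattice with top and bottom). *)
From HB Require Import structures.
From Stdlib Require List.
From mathcomp Require Import all_boot all_order.
Set Implicit Arguments. Unset Strict Implicit. Unset Printing Implicit Defensive.
Import Order.TTheory.
Local Open Scope order_scope.

Section BoolMetric.
Context {disp : Order.disp_t} {B : ctbDistrLatticeType disp}.

Definition complete_BA : Prop :=
  forall P : B -> Prop, exists s : B,
    (forall b, P b -> b <= s) /\ (forall t, (forall b, P b -> b <= t) -> s <= t).

Context {X : Type}.

Definition bmetric (A : X -> Prop) (d : X -> X -> B) : Prop :=
  (forall x y, A x -> A y -> d x y = d y x) /\
  (forall x y, A x -> A y -> (d x y = \bot <-> x = y)) /\
  (forall x y z, A x -> A y -> A z -> d x z <= d x y `|` d y z).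

Definition partition_B (n : nat) (a : 'I_n -> B) : Prop :=
  (forall i j : 'I_n, i <> j -> a i `&` a j = \bot) /\
  \join_(i < n) a i = \top.

(* x is the convex combination of xs with coefficients a *)
Definition convcomb (d : X -> X -> B) (x : X) (n : nat)
  (xs : 'I_n -> X) (a : 'I_n -> B) : Prop :=
  forall i, a i `&` d x (xs i) = \bot.

Definition convex (A : X -> Prop) (d : X -> X -> B) : Prop :=
  forall (n : nat) (xs : 'I_n -> X) (a : 'I_n -> B),
    partition_B a -> (forall i, A (xs i)) ->
    exists x, A x /\ convcomb d x xs a.

Definition fin_generated (A : X -> Prop) (d : X -> X -> B) : Prop :=
  exists S : seq X, (forall s, List.In s S -> A s) /\
    forall x, A x -> exists (m : nat) (ys : 'I_m -> X) (a : 'I_m -> B),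
      (forall j, List.In (ys j) S) /\ partition_B a /\ convcomb d x ys a.

Definition CFG (A : X -> Prop) (d : X -> X -> B) : Prop :=
  bmetric A d /\ convex A d /\ fin_generated A d.

Definition Conv (A : X -> Prop) (d : X -> X -> B) (U : X -> Prop) : X -> Prop :=
  fun x => forall W : X -> Prop,
    (forall y, W y -> A y) -> (forall y, U y -> W y) -> CFG W d -> W x.

End BoolMetric.

Section Maps.
Context {disp : Order.disp_t} {B : ctbDistrLatticeType disp} {X Y : Type}.

Definition maps_into (f : X -> Y) (U : X -> Prop) (V : Y -> Prop) : Prop :=
  forall x, U x -> V (f x).

Definition contractive (dX : X -> X -> B) (dY : Y -> Y -> B)
  (f : X -> Y) (U : X -> Prop) : Prop :=
  forall x y, U x -> U y -> (dY (f x) (f y) <= dX x y)%O.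

Definition isometry (dX : X -> X -> B) (dY : Y -> Y -> B)
  (f : X -> Y) (U : X -> Prop) (V : Y -> Prop) : Prop :=
  maps_into f U V /\
  (forall x y, U x -> U y -> f x = f y -> x = y) /\
  (forall v, V v -> exists u, U u /\ f u = v) /\
  (forall x y, U x -> U y -> dY (f x) (f y) = dX x y).

End Maps.

From HB Require Import structures.
From Stdlib Require Import ClassicalEpsilon FunctionalExtensionality PropExtensionality.
From Stdlib Require List.
From mathcomp Require Import all_boot all_order.
Set Implicit Arguments. Unset Strict Implicit. Unset Printing Implicit Defensive.
Import Order.Theory.
Local Open Scope order_scope.

(* Over a complete Boolean algebra B, the convex hull Conv(U) of a nonempty
   U inside a CFG-space A is the set of points adherent to U, i.e. the x in A
   with inf_{u in U} d(x,u) = \bot.  The key tool is a mixing lemma: in a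
   CFG-space, a consistent family of points x_i with weights c_i covering B
   (c_i /\ c_j disjoint from d(x_i,x_j), sup c_i = \top) has a point y equal
   to x_i on c_i; it is a convex combination of the finitely many generators,
   with a partition obtained by disjointifying suitable suprema.
   From mixing we get: (1) adherent points lie in every CFG-subspace
   containing U, and they form a CFG-space themselves (finite generation by
   retracting generators onto it), so Conv(U) is the adherent set; (2) a
   contractive f : U -> V extends to x |-> the mixture of the f u with weights
   ~d(x,u), which is contractive and maps Conv(U) into Conv(V); (3) contractive
   maps on Conv(U) are determined by their values on U.  For an isometry f,
   extending its inverse and using (3) shows that the extension is bijective
   and distance preserving. *)

Section BooleanAlgebra.
Context {disp : Order.disp_t} {B : ctbDistrLatticeType disp}.
Implicit Types a b c t : B.

Lemma disjointP a b : a `&` b = \bot <-> a <= ~` b.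
Proof. by rewrite -disj_leC; split => [->|/eqP]. Qed.

Lemma leC_join a b c : a <= ~` b -> a <= ~` c -> a <= ~` (b `|` c).
Proof. by rewrite complU lexI => -> ->. Qed.

Lemma leC_antimono a b c : a <= ~` b -> c <= b -> a <= ~` c.
Proof. by move=> ab cb; apply: le_trans ab _; rewrite leC. Qed.

Lemma leC_meet a b c : (a <= ~` (b `&` c)) = (a `&` b <= ~` c).
Proof. by rewrite -!disj_leC meetA. Qed.

Lemma top_leC t : \top <= ~` t -> t = \bot.
Proof.
move=> h; have Ct : ~` t = \top by apply/le_anti; rewrite h lex1.
by rewrite -(complK t) Ct compl1.
Qed.

(* The family c (indexed by the i satisfying P) covers B: no nonzero element
   is disjoint from all of its members, i.e. its supremum is \top. *)
Definition covers {I : Type} (P : I -> Prop) (c : I -> B) : Prop :=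
  forall t, (forall i, P i -> c i <= ~` t) -> t = \bot.

Lemma covers_leC I (P : I -> Prop) (c : I -> B) a t :
  covers P c -> (forall i, P i -> c i `&` a <= ~` t) -> a <= ~` t.
Proof. by move=> cov h; apply/disjointP/cov => i Pi; rewrite leC_meet; apply: h. Qed.

Lemma partition_covers n (a : 'I_n -> B) : partition_B a -> covers (fun=> True) a.
Proof.
by move=> [_ ja] t h; apply: top_leC; rewrite -ja; apply: joins_le => i _; apply: h.
Qed.

Lemma covers_join n (e : 'I_n -> B) : covers (fun=> True) e -> \join_(k < n) e k = \top.
Proof.
move=> cov; rewrite -[LHS]complK (cov (~` \join_(k < n) e k)) ?compl0 // => k _.
by rewrite complK; apply: joins_sup.
Qed.

(* A finite covering family is refined into a partition by keeping from e k
   only what is not already covered by the e l with l < k. *)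
Lemma disjointify n (e : 'I_n -> B) : covers (fun=> True) e ->
  exists e' : 'I_n -> B, partition_B e' /\ forall k, e' k <= e k.
Proof.
move=> cov; pose before (k : 'I_n) := \join_(l < n | (l < k)%N) e l.
pose e' k := e k `&` ~` before k.
have ordered (i j : 'I_n) : (i < j)%N -> e' i `&` e' j = \bot.
  move=> ij; apply/disjointP; rewrite lexC; apply: le_trans (leIr _ _) _.
  by rewrite leC; apply: le_trans (leIl _ _) _; apply: joins_sup.
have cov' : covers (fun=> True) e'.
  move=> t ht; apply: cov.
  suff below j (k : 'I_n) : (k < j)%N -> e k <= ~` t by move=> k _; apply: (below k.+1).
  elim: j k => [//|j IH] k kj.
  rewrite -[e k]meetx1 -(joinxC (before k)) meetUr leUx (ht k) // andbT.
  apply: le_trans (leIr _ _) _; apply: joins_le => l lk.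
  exact: IH (leq_trans lk kj).
exists e'; split=> [|k]; last exact: leIl.
split; last exact: covers_join.
move=> i j /eqP; rewrite neq_ltn => /orP[ij|ji]; first exact: ordered.
by rewrite meetC; apply: ordered.
Qed.

End BooleanAlgebra.

Section Completeness.
Context {disp : Order.disp_t} {B : ctbDistrLatticeType disp}.
Variable Hc : complete_BA (B := B).

Definition supB (P : B -> Prop) : B :=
  proj1_sig (constructive_indefinite_description _ (Hc P)).

Lemma supB_ub P b : P b -> b <= supB P.
Proof.
rewrite /supB; case: (constructive_indefinite_description _ _) => s [ub _] /=.
exact: ub.
Qed.

Lemma supB_least P t : (forall b, P b -> b <= t) -> supB P <= t.
Proof.
rewrite /supB; case: (constructive_indefinite_description _ _) => s [_ least] /=.
exact: least.
Qed.

End Completeness.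

Lemma choice_on {T S : Type} (D : T -> Prop) (R : T -> S -> Prop) :
  inhabited S -> (forall x, D x -> exists y, R x y) ->
  exists g : T -> S, forall x, D x -> R x (g x).
Proof.
move=> inh h; exists (fun x => epsilon inh (R x)) => x Dx.
exact: epsilon_spec (h x Dx).
Qed.

Section Metric.
Context {disp : Order.disp_t} {B : ctbDistrLatticeType disp} {X : Type}.
Variables (A : X -> Prop) (d : X -> X -> B).
Hypothesis bm : bmetric A d.

Lemma bm_sym x y : A x -> A y -> d x y = d y x.
Proof. by case: bm => sym _; apply: sym. Qed.

Lemma bm_refl x : A x -> d x x = \bot.
Proof. by case: bm => _ [sep _] Ax; apply/(proj2 (sep _ _ Ax Ax)). Qed.

Lemma bm_eq x y : A x -> A y -> d x y = \bot -> x = y.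
Proof. by case: bm => _ [sep _] Ax Ay; apply/(proj1 (sep _ _ Ax Ay)). Qed.

(* Read a <= ~` d x y as "x and y agree on a"; the ultrametric triangle
   inequality makes agreement transitive. *)
Lemma agree_trans x y z (a : B) : A x -> A y -> A z ->
  a <= ~` d x y -> a <= ~` d y z -> a <= ~` d x z.
Proof.
case: bm => _ [_ tri] Ax Ay Az axy ayz.
exact: leC_antimono (leC_join axy ayz) (tri _ _ _ Ax Ay Az).
Qed.

Lemma covers_eq I (P : I -> Prop) (c : I -> B) x y : A x -> A y ->
  covers P c -> (forall i, P i -> c i <= ~` d x y) -> x = y.
Proof. by move=> Ax Ay cov agree; apply: bm_eq Ax Ay (cov _ agree). Qed.

Lemma bmetric_sub (W : X -> Prop) : (forall x, W x -> A x) -> bmetric W d.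
Proof.
move=> WA; split; [|split].
- by move=> x y /WA Ax /WA Ay; apply: bm_sym.
- by case: bm => _ [sep _] x y /WA Ax /WA Ay; apply: sep.
- by case: bm => _ [_ tri] x y z /WA Ax /WA Ay /WA Az; apply: tri.
Qed.

End Metric.

Lemma nth_in_list {T : Type} (s : seq T) x0 i : (i < size s)%N -> List.In (nth x0 s i) s.
Proof. by elim: s i => [//|z s IH] [|i] /= lt; [left | right; apply: IH]. Qed.

Lemma in_list_nth {T : Type} (s : seq T) z :
  List.In z s -> exists2 i, (i < size s)%N & nth z s i = z.
Proof.
elim: s => [//|y s IH] /= [->|/IH [i lt e]]; first by exists 0%N.
by exists i.+1.
Qed.

Section Mixing.
Context {disp : Order.disp_t} {B : ctbDistrLatticeType disp} {X : Type}.
Variable Hc : complete_BA (B := B).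
Variables (W : X -> Prop) (d : X -> X -> B).
Hypothesis cW : CFG W d.

Lemma fin_generated_ord : exists n (w : 'I_n -> X), (forall k, W (w k)) /\
  forall x, W x -> exists m (ys : 'I_m -> X) (a : 'I_m -> B),
    (forall j, exists k, ys j = w k) /\ partition_B a /\ convcomb d x ys a.
Proof.
have [_ [_ [S [SW gen]]]] := cW.
exists (size S), (tnth (in_tuple S)); split=> [k|x /gen [m [ys [a [ysS pa]]]]].
  by apply/SW; rewrite (tnth_nth (tnth (in_tuple S) k)); apply/nth_in_list/ltn_ord.
exists m, ys, a; split=> // j; have [i lt e] := in_list_nth (ysS j).
by exists (Ordinal lt); rewrite (tnth_nth (ys j)).
Qed.

Variables (Idx : Type) (P : Idx -> Prop) (c : Idx -> B) (x : Idx -> X).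
Hypotheses (Wx : forall i, P i -> W (x i))
  (consistent : forall i j, P i -> P j -> c i `&` c j <= ~` d (x i) (x j))
  (cov : covers P c).

(* Weight of a generator w k: the supremum of the regions c i `&` a l on which
   x i coincides with w k, a being coefficients of x i. *)
Lemma generator_weights n (w : 'I_n -> X) : (forall k, W (w k)) ->
  (forall x, W x -> exists m (ys : 'I_m -> X) (a : 'I_m -> B),
    (forall j, exists k, ys j = w k) /\ partition_B a /\ convcomb d x ys a) ->
  exists e : 'I_n -> B, covers (fun=> True) e /\
    forall k i, P i -> e k `&` c i <= ~` d (w k) (x i).
Proof.
move=> Ww gen; have bm := proj1 cW.
pose e k := supB Hc (fun b => exists i m (ys : 'I_m -> X) (a : 'I_m -> B) l,
  [/\ P i, convcomb d (x i) ys a, ys l = w k & b = c i `&` a l]).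
exists e; split=> [t et|k i Pi].
  apply: cov => i Pi; have [m [ys [a [ysw [pa cc]]]]] := gen _ (Wx Pi).
  apply: covers_leC (partition_covers pa) _ => l _; have [k wk] := ysw l.
  apply: le_trans _ (et k I); apply: supB_ub.
  by exists i, m, ys, a, l; rewrite meetC.
rewrite -leC_meet; apply: supB_least => _ [j [m [ys [a [l [Pj cc ysl ->]]]]]].
have [Wj Wi] := (Wx Pj, Wx Pi); rewrite leC_meet.
apply: (agree_trans bm (Ww k) Wj Wi).
  rewrite (bm_sym bm (Ww k) Wj) -ysl; apply: le_trans (leIl _ _) _.
  by apply: le_trans (leIr _ _) _; apply/disjointP/cc.
by rewrite -meetA meetCA; apply: le_trans (leIr _ _) _; apply: consistent.
Qed.

(* The point y is
   a convex combination of the generators, weighted by a partition refining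
   the generator weights. *)
Lemma mixing : exists y, W y /\ forall i, P i -> c i <= ~` d y (x i).
Proof.
have bm := proj1 cW.
have [n [w [Ww gen]]] := fin_generated_ord.
have [e [cov_e agree_e]] := generator_weights Ww gen.
have [e' [pe' e'e]] := disjointify cov_e.
have [y [Wy cy]] := proj1 (proj2 cW) n w e' pe' Ww.
exists y; split=> // i Pi; apply: covers_leC (partition_covers pe') _ => k _.
apply: (agree_trans bm Wy (Ww k) (Wx Pi)).
  by apply: le_trans (leIl _ _) _; apply/disjointP/cy.
by apply: le_trans (agree_e k i Pi); rewrite leI2 ?e'e.
Qed.

End Mixing.

Section Adherence.
Context {disp : Order.disp_t} {B : ctbDistrLatticeType disp} {X : Type}.
Variables (A : X -> Prop) (d : X -> X -> B) (U : X -> Prop).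

(* x adheres to U: the infimum of its distances to the points of U is \bot. *)
Definition adherent (x : X) : Prop := A x /\ covers U (fun u => ~` d x u).

Hypotheses (bm : bmetric A d) (UA : forall u, U u -> A u).

Lemma adherent_of_U u : U u -> adherent u.
Proof.
move=> Uu; split=> [|t ht]; first exact: UA.
by apply: top_leC; rewrite -compl0 -(bm_refl bm (UA Uu)); apply: ht.
Qed.

End Adherence.

Section ConvexHull.
Context {disp : Order.disp_t} {B : ctbDistrLatticeType disp} {X : Type}.
Variable Hc : complete_BA (B := B).
Variables (A : X -> Prop) (d : X -> X -> B) (U : X -> Prop).
Hypotheses (cA : CFG A d) (UA : forall u, U u -> A u) (Une : exists u, U u).
Local Notation adherent := (adherent A d U).

(* Adherent points belong to every CFG-subspace containing U: mixing the points
   of U with weights ~` d x u inside such a subspace produces x itself. *)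
Lemma adherent_sub_CFG (W : X -> Prop) x : (forall y, W y -> A y) ->
  (forall u, U u -> W u) -> CFG W d -> adherent x -> W x.
Proof.
have bm := proj1 cA; move=> WA UW cW [Ax Kx].
have consistent u v : U u -> U v -> ~` d x u `&` ~` d x v <= ~` d u v.
  move=> Uu Uv; apply: (agree_trans bm (UA Uu) Ax (UA Uv)); last exact: leIr.
  by rewrite (bm_sym bm (UA Uu) Ax) leIl.
have [y [Wy agree]] :=
  mixing Hc cW (P := U) (c := fun u => ~` d x u) (x := id) UW consistent Kx.
suff -> : x = y by [].
apply: (covers_eq bm Ax (WA _ Wy) Kx) => u Uu.
apply: (agree_trans bm Ax (UA Uu) (WA _ Wy) (lexx _)).
by rewrite (bm_sym bm (UA Uu) (WA _ Wy)); apply: agree.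
Qed.

Lemma adherent_convex : convex adherent d.
Proof.
have bm := proj1 cA; move=> n xs a pa Kxs.
have [x [Ax cx]] := proj1 (proj2 cA) n xs a pa (fun i => proj1 (Kxs i)).
exists x; split=> //; split=> // t ht.
apply: top_leC; apply: covers_leC (partition_covers pa) _ => i _.
rewrite meetx1; have [Ai Ki] := Kxs i.
apply: covers_leC Ki _ => u Uu; apply: le_trans (ht u Uu).
apply: (agree_trans bm Ax Ai (UA Uu)); last exact: leIl.
by apply: le_trans (leIr _ _) _; apply/disjointP/cx.
Qed.

(* It is obtained by
   mixing s near U with a fixed point u0 of U on the region far from U. *)
Lemma adherent_retract s : A s ->
  exists p, adherent p /\ forall u, U u -> ~` d s u <= ~` d s p.
Proof.
have bm := proj1 cA; move=> As; have [u0 Uu0] := Une.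
pose near_U := supB Hc (fun b => exists u, U u /\ b = ~` d s u).
pose far := ~` near_U.
have far_le u : U u -> far <= d s u by move=> Uu; rewrite leCx; apply: supB_ub; exists u.
have near_far t : (forall u, U u -> ~` d s u <= ~` t) -> far <= ~` t -> t = \bot.
  move=> near hfar; apply: top_leC; rewrite -(joinxC near_U) leUx hfar andbT.
  by apply: supB_least => _ [u [Uu ->]]; apply: near.
pose P o := oapp U True o.
pose c o := oapp (fun u => ~` d s u) far o.
pose x o := odflt u0 o.
have Ax o : P o -> A (x o) by case: o => [u /UA|_] //; apply: UA.
have consistent o o' : P o -> P o' -> c o `&` c o' <= ~` d (x o) (x o').
  have far_disj u : U u -> ~` d s u `&` far = \bot.
    by move=> Uu; apply/disjointP; rewrite lexC complK; apply: far_le.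
  case: o o' => [u|] [v|] /= Pu Pv.
  - apply: (agree_trans bm (UA Pu) As (UA Pv)); last exact: leIr.
    by rewrite (bm_sym bm (UA Pu) As) leIl.
  - by rewrite far_disj ?le0x.
  - by rewrite meetC far_disj ?le0x.
  - by rewrite (bm_refl bm (UA Uu0)) compl0 lex1.
have cov : covers P c.
  by move=> t ht; apply: near_far => [u Uu|]; [apply: (ht (Some u)) | apply: (ht None)].
have [p [Ap agree]] := mixing Hc cA Ax consistent cov.
have near u : U u -> ~` d s u <= ~` d p u by apply: (agree (Some u)).
exists p; split.
  split=> // t ht; apply: near_far => [u Uu|]; first exact: le_trans (near u Uu) (ht u Uu).
  exact: le_trans (agree None I) (ht u0 Uu0).
move=> u Uu; apply: (agree_trans bm As (UA Uu) Ap (lexx _)).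
by rewrite (bm_sym bm (UA Uu) Ap); apply: near.
Qed.

(* Retracting a finite generating set of A gives one of the adherent points:
   where an adherent x coincides with a generator, it coincides with its retract. *)
Lemma adherent_fin_generated : fin_generated adherent d.
Proof.
have bm := proj1 cA; have [u0 _] := Une.
have [_ [_ [S [SA gen]]]] := cA.
have [p pP] := choice_on (inhabits u0) adherent_retract.
exists (List.map p S); split=> [_ /List.in_map_iff [s [<- /SA/pP []]] //|x [Ax Kx]].
have [m [ys [a [ysS [pa cx]]]]] := gen x Ax.
exists m, (fun j => p (ys j)), a; split=> [j|]; first exact: List.in_map.
split=> // j; have As := SA _ (ysS j); have [[Ap _] retr] := pP _ As.
have axy : a j <= ~` d x (ys j) by apply/disjointP/cx.
apply/disjointP; apply: covers_leC Kx _ => u Uu.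
apply: (agree_trans bm Ax As Ap (le_trans (leIr _ _) axy)).
apply: le_trans (retr u Uu); apply: (agree_trans bm As Ax (UA Uu)); last exact: leIl.
by rewrite (bm_sym bm As Ax); apply: le_trans (leIr _ _) axy.
Qed.

Lemma adherent_CFG : CFG adherent d.
Proof.
split; first by apply: (bmetric_sub (proj1 cA)) => x [].
by split; [exact: adherent_convex | exact: adherent_fin_generated].
Qed.

Lemma Conv_adherent : Conv A d U = adherent.
Proof.
apply: functional_extensionality => x; apply: propositional_extensionality.
split=> [Cx|Kx W WA UW cW]; last exact: adherent_sub_CFG Kx.
by apply: Cx; [move=> y [] | exact: adherent_of_U (proj1 cA) UA | exact: adherent_CFG].
Qed.

End ConvexHull.

Section Uniqueness.
Context {disp : Order.disp_t} {B : ctbDistrLatticeType disp} {X Y : Type}.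
Variables (AX : X -> Prop) (dX : X -> X -> B) (AY : Y -> Prop) (dY : Y -> Y -> B).
Variable U : X -> Prop.
Hypotheses (bmX : bmetric AX dX) (bmY : bmetric AY dY) (UA : forall u, U u -> AX u).

(* A contractive map on the adherent points of U is determined by its values
   on U: g1 x and g2 x agree wherever x agrees with some u in U. *)
Lemma adherent_ext_unique (g1 g2 : X -> Y) :
  maps_into g1 (adherent AX dX U) AY -> maps_into g2 (adherent AX dX U) AY ->
  (forall u, U u -> g1 u = g2 u) ->
  contractive dX dY g1 (adherent AX dX U) -> contractive dX dY g2 (adherent AX dX U) ->
  forall x, adherent AX dX U x -> g1 x = g2 x.
Proof.
move=> A1 A2 e12 c1 c2 x Kx.
apply: (covers_eq bmY (A1 _ Kx) (A2 _ Kx) (proj2 Kx)) => u Uu.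
have Ku := adherent_of_U bmX UA Uu.
apply: (agree_trans bmY (A1 _ Kx) (A1 _ Ku) (A2 _ Kx)); first by rewrite leC c1.
by rewrite e12 // (bm_sym bmY (A2 _ Ku) (A2 _ Kx)) leC c2.
Qed.

End Uniqueness.

Lemma adherent_fixed {disp : Order.disp_t} {B : ctbDistrLatticeType disp} {X : Type}
  (A : X -> Prop) (d : X -> X -> B) (U : X -> Prop) (k : X -> X) :
  bmetric A d -> (forall u, U u -> A u) ->
  maps_into k (adherent A d U) A -> (forall u, U u -> k u = u) ->
  contractive d d k (adherent A d U) -> forall x, adherent A d U x -> k x = x.
Proof.
move=> bm UA kA kU kc; apply: (adherent_ext_unique bm bm UA) => //.
by move=> x [].
Qed.

Section Extension.
Context {disp : Order.disp_t} {B : ctbDistrLatticeType disp} {X Y : Type}.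
Variable Hc : complete_BA (B := B).
Variables (AX : X -> Prop) (dX : X -> X -> B) (AY : Y -> Prop) (dY : Y -> Y -> B).
Variables (U : X -> Prop) (f : X -> Y).
Hypotheses (bmX : bmetric AX dX) (cY : CFG AY dY) (UA : forall u, U u -> AX u).
Hypotheses (fA : maps_into f U AY) (fc : contractive dX dY f U).
Local Notation adherentX := (adherent AX dX U).

(* The image of an adherent x: mix the f u with the weights ~` dX x u, which is
   consistent because f is contractive. *)
Lemma extension_point x : adherentX x ->
  exists y, AY y /\ forall u, U u -> ~` dX x u <= ~` dY y (f u).
Proof.
move=> [Ax Kx].
have consistent u v : U u -> U v -> ~` dX x u `&` ~` dX x v <= ~` dY (f u) (f v).
  move=> Uu Uv; apply: leC_antimono (fc Uu Uv).
  apply: (agree_trans bmX (UA Uu) Ax (UA Uv)); last exact: leIr.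
  by rewrite (bm_sym bmX (UA Uu) Ax) leIl.
exact: (mixing Hc cY (P := U) (c := fun u => ~` dX x u) fA consistent Kx).
Qed.

(* Choosing such an image for every adherent point defines the extension g;
   the lemmas below hold for any such choice. *)
Lemma extension_exists : (exists u, U u) -> exists g : X -> Y,
  forall x, adherentX x -> AY (g x) /\ forall u, U u -> ~` dX x u <= ~` dY (g x) (f u).
Proof. by case=> u0 /fA Afu0; apply: choice_on (inhabits (f u0)) extension_point. Qed.

Variable g : X -> Y.
Hypothesis gP : forall x, adherentX x ->
  AY (g x) /\ forall u, U u -> ~` dX x u <= ~` dY (g x) (f u).

(* g extends f: for u in U, g u agrees with f u on ~` dX u u = \top. *)
Lemma ext_on_U u : U u -> g u = f u.
Proof.
move=> Uu; have [Agu agree] := gP (adherent_of_U bmX UA Uu).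
apply: (bm_eq (proj1 cY) Agu (fA Uu)); apply: top_leC.
by rewrite -compl0 -(bm_refl bmX (UA Uu)); apply: agree.
Qed.

(* On the region where x agrees with u and y with v, the chain
   g x ~ f u ~ f v ~ g y shows that g x and g y agree. *)
Lemma ext_contractive : contractive dX dY g adherentX.
Proof.
have bmY := proj1 cY; move=> x y Kx Ky.
have [[Ax _] [Ay _]] := (Kx, Ky); have [[Agx ax] [Agy ay]] := (gP Kx, gP Ky).
rewrite -leC; apply: covers_leC (proj2 Kx) _ => u Uu.
apply: covers_leC (proj2 Ky) _ => v Uv.
set a := _ `&` _.
have au : a <= ~` dX x u by apply: le_trans (leIr _ _) _; apply: leIl.
have axy : a <= ~` dX x y by apply: le_trans (leIr _ _) _; apply: leIr.
have ayv : a <= ~` dX y v by apply: leIl.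
have auv : a <= ~` dX u v.
  apply: (agree_trans bmX (UA Uu) Ay (UA Uv)) => //.
  by apply: (agree_trans bmX (UA Uu) Ax Ay) => //; rewrite (bm_sym bmX (UA Uu) Ax).
apply: (agree_trans bmY Agx (fA Uv) Agy).
  apply: (agree_trans bmY Agx (fA Uu) (fA Uv)); first exact: le_trans au (ax u Uu).
  exact: leC_antimono auv (fc Uu Uv).
by rewrite (bm_sym bmY (fA Uv) Agy); apply: le_trans ayv (ay v Uv).
Qed.

Lemma ext_maps (V : Y -> Prop) : maps_into f U V ->
  maps_into g adherentX (adherent AY dY V).
Proof.
move=> fUV x Kx; have [Agx agree] := gP Kx; split=> // t ht.
by apply: (proj2 Kx) => u Uu; apply: le_trans (agree u Uu) (ht _ (fUV _ Uu)).
Qed.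

End Extension.

Section Isometry.
Context {disp : Order.disp_t} {B : ctbDistrLatticeType disp} {X Y : Type}.
Variable Hc : complete_BA (B := B).
Variables (AX : X -> Prop) (dX : X -> X -> B) (AY : Y -> Prop) (dY : Y -> Y -> B).
Variables (U : X -> Prop) (V : Y -> Prop) (f : X -> Y).
Hypotheses (cX : CFG AX dX) (cY : CFG AY dY).
Hypotheses (UA : forall u, U u -> AX u) (VA : forall v, V v -> AY v) (Une : exists u, U u).
Hypothesis fiso : isometry dX dY f U V.
Local Notation adherentX := (adherent AX dX U).
Local Notation adherentY := (adherent AY dY V).

(* A contractive extension g of an isometry f is an isometry: extending the
   inverse of f gives h, and h \o g, g \o h are contractive extensions of the
   identities of U and V, hence identities by uniqueness. *)
Lemma extension_isometry (g : X -> Y) : maps_into g adherentX adherentY ->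
  (forall u, U u -> g u = f u) -> contractive dX dY g adherentX ->
  isometry dX dY g adherentX adherentY.
Proof.
move=> gmaps gU gc; have [bmX bmY] := (proj1 cX, proj1 cY).
have [fUV [finj [fsurj fd]]] := fiso; have [u0 Uu0] := Une.
have [fi fiP] := choice_on (R := fun v u => U u /\ f u = v) (inhabits u0) fsurj.
have fiUV : maps_into fi V U by move=> v /fiP [].
have fic : contractive dY dX fi V.
  by move=> v w /fiP [Uv ev] /fiP [Uw ew]; rewrite -fd // ev ew.
have fiA : maps_into fi V AX by move=> v /fiUV /UA.
have [h hP] := extension_exists Hc bmY cX VA fiA fic (ex_intro _ (f u0) (fUV _ Uu0)).
have hmaps := ext_maps hP fiUV; have hc := ext_contractive bmY cX VA fiA fic hP.
have hg x : adherentX x -> h (g x) = x.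
  apply: (adherent_fixed bmX UA (k := h \o g)).
  - by move=> z /gmaps /hmaps [].
  - move=> u Uu /=; rewrite gU // (ext_on_U bmY cX VA fiA hP (fUV _ Uu)).
    by have [Ufi efi] := fiP _ (fUV _ Uu); apply: finj.
  - by move=> z w Kz Kw; apply: le_trans (hc _ _ (gmaps _ Kz) (gmaps _ Kw)) (gc _ _ Kz Kw).
have gh v : adherentY v -> g (h v) = v.
  apply: (adherent_fixed bmY VA (k := g \o h)).
  - by move=> z /hmaps /gmaps [].
  - move=> w Vw /=; rewrite (ext_on_U bmY cX VA fiA hP Vw) gU; last exact: fiUV.
    by have [_ efi] := fiP _ Vw.
  - by move=> z w Kz Kw; apply: le_trans (gc _ _ (hmaps _ Kz) (hmaps _ Kw)) (hc _ _ Kz Kw).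
split=> //; split; [|split].
- by move=> x y Kx Ky gxy; rewrite -(hg x Kx) -(hg y Ky) gxy.
- by move=> v Kv; exists (h v); split; [apply: hmaps | apply: gh].
- move=> x y Kx Ky; apply: le_anti; rewrite gc //=.
  by rewrite -{1}(hg x Kx) -{1}(hg y Ky); apply: hc; apply: gmaps.
Qed.

End Isometry.

Theorem theorem4p3 (disp : Order.disp_t) (B : ctbDistrLatticeType disp)
  (X Y : Type) (AX : X -> Prop) (dX : X -> X -> B)
  (AY : Y -> Prop) (dY : Y -> Y -> B)
  (U : X -> Prop) (V : Y -> Prop) (f : X -> Y) :
  complete_BA (B := B) ->
  CFG AX dX -> CFG AY dY ->
  (forall x, U x -> AX x) -> (exists x, U x) ->
  (forall y, V y -> AY y) -> (exists y, V y) ->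
  maps_into f U V -> contractive dX dY f U ->
  exists g : X -> Y,
    (maps_into g (Conv AX dX U) (Conv AY dY V) /\
     (forall x, U x -> g x = f x) /\
     contractive dX dY g (Conv AX dX U)) /\
    (forall g' : X -> Y,
       maps_into g' (Conv AX dX U) (Conv AY dY V) ->
       (forall x, U x -> g' x = f x) ->
       contractive dX dY g' (Conv AX dX U) ->
       forall x, Conv AX dX U x -> g' x = g x) /\
    (isometry dX dY f U V ->
       isometry dX dY g (Conv AX dX U) (Conv AY dY V)).
Proof.
move=> Hc cX cY UA Une VA Vne fUV fc.
rewrite (Conv_adherent Hc cX UA Une) (Conv_adherent Hc cY VA Vne).
have [bmX bmY] := (proj1 cX, proj1 cY).
have fA : maps_into f U AY by move=> u /fUV /VA.
have [g gP] := extension_exists Hc bmX cY UA fA fc Une.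
have gU := ext_on_U bmX cY UA fA gP; have gc := ext_contractive bmX cY UA fA fc gP.
have gmaps := ext_maps gP fUV.
exists g; split=> //; split=> [g' g'maps g'U g'c|fiso]; last first.
  exact: (extension_isometry Hc cX cY UA VA Une fiso gmaps gU gc).
apply: (adherent_ext_unique bmX bmY UA) => //.
- by move=> x /g'maps [].
- by move=> x /gmaps [].
- by move=> u Uu; rewrite g'U ?gU.
Qed.
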